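(* Let $s,n,k$ be positive integers, $\Gamma=\mathbb{Z}_{sn}\mathbin{\mathrm{wr}}\mathbb{Z}^k$ and $G=\mathbb{Z}_n\mathbin{\mathrm{wr}}\mathbb{Z}^k$, and let $\Pi\colon\Gamma\to G$ be the homomorphism reducing coefficients mod $n$ (defined in the context). Then $\ker\Pi$ is a completely invariant subgroup of $\Gamma$, i.e. it is mapped into itself by every endomorphism of $\Gamma$.
   Context: For a positive integer $m$, $\mathbb{Z}_m\mathbin{\mathrm{wr}}\mathbb{Z}^k=\bigoplus_{x\in\mathbb{Z}^k}(\mathbb{Z}_m)_x\rtimes_\alpha\mathbb{Z}^k$ is the restricted wreath product, where $\alpha(z)$ maps $(\mathbb{Z}_m)_x$ onto $(\mathbb{Z}_m)_{z+x}$. Let $\Sigma$, $\Omega$ denote the torsion subgroups $\bigoplus_x(\mathbb{Z}_{sn})_x$ of $\Gamma$ and $\bigoplus_x(\mathbb{Z}_n)_x$ of $G$, with generators $\Delta_x$ of $(\mathbb{Z}_{sn})_x$ and $\delta_x$ of $(\mathbb{Z}_n)_x$. Define $\pi\colon\Sigma\to\Omega$ by $\pi(k_1\Delta_{x_1}+\dots+k_l\Delta_{x_l})=(k_1\bmod n)\delta_{x_1}+\dots+(k_l\bmod n)\delta_{x_l}$, and $\Pi(\sigma,z)=(\pi(\sigma),z)$ for $\sigma\in\Sigma$, $z\in\mathbb{Z}^k$. *)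

From mathcomp Require Import all_boot all_order all_algebra.
Unset Printing Implicit Defensive.
Import Order.TTheory GRing.Theory Num.Theory.
Local Open Scope ring_scope.

Definition Zk (k : nat) := 'rV[int]_k.

Definition fin_supp (k : nat) (f : Zk k -> int) : Prop :=
  exists S : seq (Zk k), forall x, x \notin S -> f x = 0.

(* Values are canonical representatives of Z_m, i.e. in [0, m)
   (for m > 0); an element of (+)_x (Z_m)_x is thus a finitely supported
   function with reduced values. *)
Definition reduced (m : nat) (k : nat) (f : Zk k -> int) : Prop :=
  forall x, (f x %% m%:Z)%Z = f x.

Definition is_wr_elt (m k : nat) (p : (Zk k -> int) * Zk k) : Prop :=
  fin_supp k p.1 /\ reduced m k p.1.

(* Z_m wr Z^k = (+)_{x in Z^k} (Z_m)_x  ><|_alpha  Z^k ; an element is a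
   pair (sigma, z). *)
Definition wr (m k : nat) := { p : (Zk k -> int) * Zk k | is_wr_elt m k p }.

Definition wr_sigma (m k : nat) (g : wr m k) : Zk k -> int := (sval g).1.
Definition wr_z (m k : nat) (g : wr m k) : Zk k := (sval g).2.

Lemma wr_norm_proof (m k : nat) (f : Zk k -> int) (z : Zk k) :
  fin_supp k f -> is_wr_elt m k ((fun x => (f x %% m%:Z)%Z), z).
Proof.
move=> [S HS]; split => /=.
  by exists S => x /HS ->; rewrite mod0z.
by move=> x; rewrite modz_mod.
Qed.

Definition wr_norm (m k : nat) (f : Zk k -> int) (z : Zk k)
  (H : fin_supp k f) : wr m k := exist _ _ (wr_norm_proof m k f z H).

Lemma wr_one_proof (m k : nat) : is_wr_elt m k ((fun _ => 0), 0).
Proof. by split => /=; [exists [::] | move=> x; rewrite mod0z]. Qed.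

Definition wr_one (m k : nat) : wr m k := exist _ _ (wr_one_proof m k).

(* alpha(z) maps (Z_m)_x onto (Z_m)_{z+x}, so (alpha(z) tau)(x) = tau(x - z). *)
Lemma wr_mul_supp (m k : nat) (g h : wr m k) :
  fin_supp k (fun x => wr_sigma m k g x + wr_sigma m k h (x - wr_z m k g)).
Proof.
case: g => [[s z] Hg]; case: h => [[t w] Hh].
rewrite /wr_sigma /wr_z /=.
case: Hg => [[S HS] _]; case: Hh => [[T HT] _] /=; rewrite /= in HS HT.
exists (S ++ map (fun y => y + z) T) => x; rewrite mem_cat negb_or => /andP[xS xT].
rewrite HS // HT ?add0r //; apply: contra xT => H.
by apply/mapP; exists (x - z) => //; rewrite subrK.
Qed.

(* (sigma, z) * (tau, w) = (sigma + alpha(z) tau, z + w) *)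
Definition wr_mul (m k : nat) (g h : wr m k) : wr m k :=
  wr_norm m k _ (wr_z m k g + wr_z m k h) (wr_mul_supp m k g h).

Lemma wr_sigma_supp (m k : nat) (g : wr m k) : fin_supp k (wr_sigma m k g).
Proof. by case: g => [[s z] Hg]; rewrite /wr_sigma /=; case: Hg. Qed.

Definition Pi (s n k : nat) (g : wr (s * n) k) : wr n k :=
  wr_norm n k _ (wr_z (s * n) k g) (wr_sigma_supp (s * n) k g).

Definition is_endo (m k : nat) (f : wr m k -> wr m k) : Prop :=
  forall g h, f (wr_mul m k g h) = wr_mul m k (f g) (f h).

Definition completely_invariant (m k : nat) (H : wr m k -> Prop) : Prop :=
  forall f, is_endo m k f -> forall g, H g -> H (f g).

Definition kerPi (s n k : nat) : wr (s * n) k -> Prop :=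
  fun g => Pi s n k g = wr_one n k.

(** Elements of the base group [Sigma = (+)_x Z_m] have order dividing m,
    while (sigma, z) with z <> 0 has infinite order, the translation part of
    its j-th power being j z.  So [Sigma] is the torsion subgroup, and every
    endomorphism maps it into itself.  For m = s n, the kernel of [Pi] consists
    of the elements of [Sigma] with all coefficients divisible by n, i.e. of
    the n-th powers h^n with h in [Sigma]; an endomorphism f sends h^n to
    f(h)^n, again such a power. *)

From mathcomp Require Import all_boot all_order all_algebra.
From Stdlib Require Import FunctionalExtensionality ProofIrrelevance.
Import GRing.Theory Num.Theory.
Local Open Scope ring_scope.

Lemma mx_mulrn_eq0 {R : numDomainType} {p q : nat} (A : 'M[R]_(p, q)) (j : nat) :
  (A *+ j == 0) = (j == 0)%N || (A == 0).
Proof.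
have [->|j_gt0] := posnP j; first by rewrite mulr0n eqxx.
apply/eqP/orP => [Aj0|[//|/eqP->]]; last by rewrite mul0rn.
right; apply/eqP/matrixP => a b; have := congr1 (fun B : 'M[R]_(p, q) => B a b) Aj0.
by rewrite /= mulmxnE !mxE => /eqP; rewrite mulrn_eq0 eqn0Ngt j_gt0 => /eqP.
Qed.

Section WreathProduct.

Variables m k : nat.

Local Notation wr := (wr m k).
Local Notation sigma := (wr_sigma m k).
Local Notation z := (wr_z m k).
Local Notation mul := (wr_mul m k).
Local Notation one := (wr_one m k).

Lemma wr_ext (g h : wr) : sigma g =1 sigma h -> z g = z h -> g = h.
Proof.
case: g => [[a u] Hg]; case: h => [[b w] Hh]; rewrite /wr_sigma /wr_z /= => Eab Euw.
move/functional_extensionality: Eab => Eab; subst b w.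
by congr exist; apply: proof_irrelevance.
Qed.

Lemma wr_sigma_mod (g : wr) x : (sigma g x %% m%:Z)%Z = sigma g x.
Proof. exact: (proj2 (svalP g)). Qed.

Lemma wr_mul_z (g h : wr) : z (mul g h) = z g + z h.
Proof. by []. Qed.

Lemma wr_mul_sigma (g h : wr) x :
  sigma (mul g h) x = ((sigma g x + sigma h (x - z g)) %% m%:Z)%Z.
Proof. by []. Qed.

Lemma wr_one_z : z one = 0. Proof. by []. Qed.

Lemma wr_one_sigma x : sigma one x = 0. Proof. by []. Qed.

Lemma wr_mul1g (g : wr) : mul one g = g.
Proof.
apply: wr_ext => [x|]; last by rewrite wr_mul_z wr_one_z add0r.
by rewrite wr_mul_sigma wr_one_sigma wr_one_z add0r subr0 wr_sigma_mod.
Qed.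

Lemma wr_idempotent (g : wr) : mul g g = g -> g = one.
Proof.
move=> gg; have zg : z g = 0.
  by apply: (@addrI _ (z g)); rewrite -wr_mul_z gg addr0.
apply: wr_ext => [x|//]; rewrite wr_one_sigma.
have := congr1 (sigma^~ x) gg; rewrite wr_mul_sigma zg subr0.
set a := sigma g x => aa.
have : (a + a == a + 0 %[mod m%:Z])%Z by rewrite aa addr0 /a wr_sigma_mod.
by rewrite eqz_modDl mod0z /a wr_sigma_mod => /eqP.
Qed.

Lemma endo_one (f : wr -> wr) : is_endo m k f -> f one = one.
Proof. by move=> f_endo; apply: wr_idempotent; rewrite -f_endo wr_mul1g. Qed.

Fixpoint wr_exp (g : wr) (j : nat) : wr :=
  if j is j'.+1 then mul g (wr_exp g j') else one.

Lemma endo_exp (f : wr -> wr) (g : wr) (j : nat) :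
  is_endo m k f -> f (wr_exp g j) = wr_exp (f g) j.
Proof.
move=> f_endo; elim: j => [|j IHj] /=; first exact: endo_one.
by rewrite f_endo IHj.
Qed.

Lemma wr_exp_z (g : wr) (j : nat) : z (wr_exp g j) = z g *+ j.
Proof. by elim: j => [|j IHj] //=; rewrite wr_mul_z IHj mulrS. Qed.

Lemma wr_exp_sigma (g : wr) (j : nat) : z g = 0 ->
  forall x, sigma (wr_exp g j) x = ((sigma g x *+ j) %% m%:Z)%Z.
Proof.
move=> zg x; elim: j => [|j IHj] /=; first by rewrite wr_one_sigma mod0z.
by rewrite wr_mul_sigma zg subr0 IHj modzDmr mulrS.
Qed.

Lemma wr_exp_order (g : wr) : z g = 0 -> wr_exp g m = one.
Proof.
move=> zg; apply: wr_ext => [x|]; last by rewrite wr_exp_z zg mul0rn.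
by rewrite wr_exp_sigma // wr_one_sigma -mulr_natr natz modzMl.
Qed.

Lemma wr_torsion_z (g : wr) (j : nat) : (0 < j)%N -> wr_exp g j = one -> z g = 0.
Proof.
move=> j_gt0 gj; have := mx_mulrn_eq0 (z g : Zk k) j.
by rewrite -wr_exp_z gj wr_one_z eqxx eqn0Ngt j_gt0 => /esym/eqP.
Qed.

Lemma endo_torsion (f : wr -> wr) (g : wr) :
  (0 < m)%N -> is_endo m k f -> z g = 0 -> z (f g) = 0.
Proof.
move=> m_gt0 f_endo zg; apply: (@wr_torsion_z (f g) m m_gt0).
by rewrite -endo_exp // wr_exp_order // endo_one.
Qed.

End WreathProduct.

Arguments wr_exp {m k} g j.

Section KernelOfPi.

Variables s n k : nat.
Hypothesis n_gt0 : (0 < n)%N.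

Local Notation m := (s * n)%N.
Local Notation sigma := (wr_sigma m k).
Local Notation z := (wr_z m k).

Lemma kerPiP (g : wr m k) :
  kerPi s n k g <-> z g = 0 /\ forall x, (n%:Z %| sigma g x)%Z.
Proof.
split=> [gPi | [zg n_dvd]].
  split; first exact: (congr1 (wr_z n k) gPi).
  by move=> x; apply/dvdz_mod0P; exact: (congr1 (fun p => wr_sigma n k p x) gPi).
apply: wr_ext => [x|//]; exact/dvdz_mod0P.
Qed.

Lemma div_sigma_supp (g : wr m k) : fin_supp k (fun x => (sigma g x %/ n%:Z)%Z).
Proof.
by case: (wr_sigma_supp m k g) => S S_supp; exists S => x /S_supp ->; rewrite div0z.
Qed.

Lemma kerPi_exp (g : wr m k) :
  kerPi s n k g -> exists2 h : wr m k, z h = 0 & g = wr_exp h n.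
Proof.
case/kerPiP => zg n_dvd; exists (wr_norm m k _ 0 (div_sigma_supp g)) => //.
apply: wr_ext => [x|]; last by rewrite wr_exp_z zg mul0rn.
rewrite wr_exp_sigma //= /wr_sigma /= -/(sigma g x) -mulr_natr modzMml.
by rewrite natz divzK // wr_sigma_mod.
Qed.

Lemma exp_kerPi (h : wr m k) : z h = 0 -> kerPi s n k (wr_exp h n).
Proof.
move=> zh; apply/kerPiP; split=> [|x]; first by rewrite wr_exp_z zh mul0rn.
rewrite wr_exp_sigma // -mulr_natr natz PoszM -mulz_modl //.
exact/dvdz_mull/dvdzz.
Qed.

End KernelOfPi.

Theorem lemma3p1 (s n k : nat) (hs : (0 < s)%N) (hn : (0 < n)%N) (hk : (0 < k)%N) :
  completely_invariant (s * n) k (kerPi s n k).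
Proof.
move=> f f_endo g /kerPi_exp[h zh ->].
rewrite endo_exp //; apply: exp_kerPi => //.
by apply: endo_torsion; rewrite ?muln_gt0 ?hs.
Qed.
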